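(* Let the valuations of all bidders in $\mathcal B_i$ be gross substitute and let $r\ge0$. Then for every $S\subseteq\Omega$ with $R_{i,r}(S)\ne-1$, the virtual-auction prices $p^S$ of the EF-mediator $\mathcal M_i$ equal $p^\Omega$ on all items of $\Omega$.
   Context: $\Omega$ is a finite set of items; price vectors $p\in\mathbb{R}^\Omega_{\ge0}$, $p(S)=\sum_{j\in S}p_j$, comparisons item-wise. Bidders have monotone valuations $v_b:2^\Omega\to\mathbb{R}$, $v_b(\emptyset)=0$; $D_b(p)$ is the set of $S\subseteq\Omega$ maximizing $v_b(S)-p(S)$. Gross substitute: for all $p^{(2)}\ge p^{(1)}\ge0$ and every $D^{(1)}\in D(p^{(1)})$ there is $D^{(2)}\in D(p^{(2)})$ containing every $j\in D^{(1)}$ with $p^{(1)}_j=p^{(2)}_j$. An allocation of $T$ to $\mathcal B_i$ is a family of pairwise disjoint subsets $\langle T_b\rangle$ of $T$; envy free on $T$ at $p$ means each $T_b$ maximizes $v_b(\cdot)-p(\cdot)$ over subsets of $T$. EF-mediator $\mathcal M_i$ with bidders $\mathcal B_i$, at reserve prices $r\ge0$: for each $S\subseteq\Omega$ the virtual auction computes a minimal (no item-wise smaller vector has the property) price vector $p^S\ge r$ envy free on $S$ for $\mathcal B_i$, with an envy-free allocation $\langle S_b\rangle$ of $S$ at $p^S$ maximizing $\sum_b p^S(S_b)$; then $p^S_j:=r_j$ for $j\notin S$. Revenue $R_{i,r}(S)=\sum_b p^S(S_b)-r(S)$ if $S_b\in D_b(p^S)$ for all $b\in\mathcal B_i$, and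 $R_{i,r}(S)=-1$ otherwise. *)

From HB Require Import structures.
From mathcomp Require Import all_boot all_order all_algebra.
From mathcomp Require Import reals.
Set Implicit Arguments. Unset Strict Implicit. Unset Printing Implicit Defensive.
Import Order.TTheory GRing.Theory Num.Theory.
Local Open Scope ring_scope.

Section Auction.
Variables (R : realType) (Omega B : finType).

Definition price (p : Omega -> R) (S : {set Omega}) : R := \sum_(j in S) p j.

Definition utility (v : {set Omega} -> R) (p : Omega -> R) (S : {set Omega}) : R :=
  v S - price p S.

Definition in_demand (v : {set Omega} -> R) (p : Omega -> R) (S : {set Omega}) : bool :=
  [forall X : {set Omega}, utility v p X <= utility v p S].

Definition valuation (v : {set Omega} -> R) : Prop :=
  v set0 = 0 /\ (forall S T : {set Omega}, S \subset T -> v S <= v T).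

Definition gross_substitute (v : {set Omega} -> R) : Prop :=
  forall p1 p2 : Omega -> R,
    (forall j, 0 <= p1 j) -> (forall j, p1 j <= p2 j) ->
    forall D1, in_demand v p1 D1 ->
    exists D2, in_demand v p2 D2 /\
      (forall j, j \in D1 -> p1 j = p2 j -> j \in D2).

Definition allocation (T : {set Omega}) (a : B -> {set Omega}) : Prop :=
  (forall b, a b \subset T) /\
  (forall b b', b != b' -> [disjoint a b & a b']).

Definition envy_free_alloc (v : B -> {set Omega} -> R) (T : {set Omega})
    (p : Omega -> R) (a : B -> {set Omega}) : Prop :=
  allocation T a /\
  (forall b (X : {set Omega}), X \subset T -> utility (v b) p X <= utility (v b) p (a b)).

Definition ef_prices (v : B -> {set Omega} -> R) (T : {set Omega})
    (r p : Omega -> R) : Prop :=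
  (forall j, r j <= p j) /\ exists a, envy_free_alloc v T p a.

Definition minimal_ef_prices (v : B -> {set Omega} -> R) (T : {set Omega})
    (r p : Omega -> R) : Prop :=
  ef_prices v T r p /\
  forall q : Omega -> R, ef_prices v T r q -> (forall j, q j <= p j) ->
    forall j, q j = p j.

Definition alloc_revenue (p : Omega -> R) (a : B -> {set Omega}) : R :=
  \sum_(b : B) price p (a b).

(* A possible outcome (p0, a) of the virtual auction on S at reserve r:
   p0 is a minimal envy-free price vector >= r on S, and a is an envy-free
   allocation of S at p0 maximizing sum_b p0(S_b). *)
Definition virtual_auction (v : B -> {set Omega} -> R) (r : Omega -> R)
    (S : {set Omega}) (p0 : Omega -> R) (a : B -> {set Omega}) : Prop :=
  minimal_ef_prices v S r p0 /\ envy_free_alloc v S p0 a /\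
  (forall a', envy_free_alloc v S p0 a' -> alloc_revenue p0 a' <= alloc_revenue p0 a).

Definition final_prices (r : Omega -> R) (S : {set Omega}) (p0 : Omega -> R) :
    Omega -> R := fun j => if j \in S then p0 j else r j.

Definition mediator_revenue (v : B -> {set Omega} -> R) (r : Omega -> R)
    (S : {set Omega}) (p0 : Omega -> R) (a : B -> {set Omega}) : R :=
  let p := final_prices r S p0 in
  if [forall b, in_demand (v b) p (a b)] then alloc_revenue p a - price r S
  else -1.

End Auction.

From HB Require Import structures.
From mathcomp Require Import all_boot all_order all_algebra.
From mathcomp Require Import reals.
From mathcomp Require Import lra.
Import Order.TTheory GRing.Theory Num.Theory.
Local Open Scope ring_scope.
Set Implicit Arguments. Unset Strict Implicit.

(* Gross substitutes make demand closed under item-wise minima of price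
   vectors: at [min P Q] some demanded bundle takes each item from a bundle
   demanded at whichever of P, Q is strictly cheaper there (ties go to Q).
   Applied bidder by bidder to the envy-free allocations at p^Omega and p^S,
   this makes [min p^Omega p^S] envy free on Omega, so minimality of p^Omega
   gives p^Omega <= p^S.  The same meet allocation then lives at p^Omega and
   only uses items of S (outside S, p^S = r <= p^Omega, so ties send the item
   to the allocation of S), hence p^Omega is envy free on S and minimality of
   p^S forces p^S = p^Omega. *)

Lemma finite_pos_lower_bound (R : realDomainType) (I : finType) (P : pred I)
    (f : I -> R) :
  (forall i, P i -> 0 < f i) -> exists2 g : R, 0 < g & forall i, P i -> g <= f i.
Proof.
move=> f_gt0; exists (\big[Order.min/1]_(i | P i) f i).
  by elim/big_ind: _ => [|x y x_gt0 y_gt0|i /f_gt0] //; rewrite ?ltr01 ?lt_min ?x_gt0.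
by move=> i Pi; rewrite (bigD1 i) //= ge_min lexx.
Qed.

Section Demand.
Variables (R : realType) (Omega : finType).
Implicit Types (v : {set Omega} -> R) (p q : Omega -> R) (X Y Z D : {set Omega}).

Definition raise_outside X (d : R) p : Omega -> R :=
  fun j => p j + (if j \in X then 0 else d).

Lemma in_demand_exists v p : exists D, in_demand v p D.
Proof.
have [D _ D_max] := @arg_maxP _ _ _ set0 predT (utility v p) isT.
by exists D; apply/forallP => X; apply: D_max.
Qed.

Lemma in_demand_small_raise v p : exists2 g : R, 0 < g & forall p',
  (forall j, p j <= p' j <= p j + g) -> forall Z, in_demand v p' Z -> in_demand v p Z.
Proof.
have [g0 g0_gt0 gap] : exists2 g0 : R, 0 < g0 &
    forall XZ : {set Omega} * {set Omega}, utility v p XZ.2 < utility v p XZ.1 ->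
      g0 <= utility v p XZ.1 - utility v p XZ.2.
  by apply: finite_pos_lower_bound => XZ; rewrite subr_gt0.
pose n : R := #|Omega|%:R.
have n1_gt0 : 0 < n + 1 by have := ler0n R #|Omega|; rewrite /n; lra.
exists (g0 / (n + 1)) => [|p' p'_near Z Z_dem]; first by rewrite divr_gt0.
apply/forallP => X; rewrite leNgt; apply/negP => /(gap (X, Z)) /= gapXZ.
have priceZ : price p Z <= price p' Z.
  by apply: ler_sum => j _; case/andP: (p'_near j).
have priceX : price p' X <= price p X + #|X|%:R * (g0 / (n + 1)).
  rewrite /price mulr_natl -sumr_const -big_split /=.
  by apply: ler_sum => j _; case/andP: (p'_near j).
have raise_small : #|X|%:R * (g0 / (n + 1)) < g0.
  rewrite mulrA ltr_pdivrMr //.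
  have : #|X|%:R <= n by rewrite /n ler_nat max_card.
  nra.
move/forallP: Z_dem => /(_ X); rewrite /utility in gapXZ *; lra.
Qed.

Lemma in_demand_raise_outside v p X d : 0 < d -> in_demand v p X ->
  forall Z, in_demand v (raise_outside X d p) Z -> Z \subset X.
Proof.
move=> d_gt0 X_dem Z Z_dem; apply/subsetP => j jZ; apply/negPn/negP => jX.
move/forallP: Z_dem => /(_ X); move/forallP: X_dem => /(_ Z).
rewrite /utility /price /raise_outside !big_split /=.
rewrite [\sum_(i in X) (if _ then _ else _)]big1 => [|i ->] //.
have : d <= \sum_(i in Z) (if i \in X then 0 else d).
  rewrite (bigD1 j) //= (negbTE jX) lerDl sumr_ge0 // => i _.
  by case: ifP => //; rewrite ltW.
lra.
Qed.

Lemma in_demand_near_raise_outside v p X d : 0 < d -> in_demand v p X ->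
  exists2 e : R, 0 < e & forall p',
    (forall j, raise_outside X d p j <= p' j <= raise_outside X d p j + e) ->
    forall Z, in_demand v p' Z -> Z \subset X.
Proof.
move=> d_gt0 X_dem.
have [e e_gt0 near] := in_demand_small_raise v (raise_outside X d p).
by exists e => // p' p'_near Z /(near _ p'_near); apply: in_demand_raise_outside.
Qed.

Lemma gross_substitute_unchanged_mem v q p' X D j : gross_substitute v ->
  (forall i, 0 <= q i) -> (forall i, q i <= p' i) ->
  (forall Z, in_demand v p' Z -> Z \subset X) ->
  in_demand v q D -> j \in D -> q j = p' j -> j \in X.
Proof.
move=> gs q_ge0 q_le dem_sub D_dem jD qj.
have [D' [D'_dem D'_keep]] := gs q p' q_ge0 q_le D D_dem.
exact: subsetP (dem_sub D' D'_dem) j (D'_keep j jD qj).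
Qed.

Lemma gross_substitute_demand_min v P Q X Y : gross_substitute v ->
  (forall j, 0 <= P j) -> (forall j, 0 <= Q j) ->
  in_demand v P X -> in_demand v Q Y ->
  exists2 D, in_demand v (fun j => Order.min (P j) (Q j)) D &
    forall j, j \in D -> if P j < Q j then j \in X else j \in Y.
Proof.
move=> gs P_ge0 Q_ge0 X_dem Y_dem.
pose m j := Order.min (P j) (Q j).
have [gm gm_gt0 m_near] := in_demand_small_raise v m.
have [gPQ gPQ_gt0 gPQ_le] : exists2 g : R, 0 < g &
    forall j, P j < Q j -> g <= Q j - P j.
  by apply: finite_pos_lower_bound => j; rewrite subr_gt0.
pose d := Order.min gm gPQ / 2.
have d_gt0 : 0 < d by rewrite divr_gt0 // lt_min gm_gt0.
have [d_gm d_gPQ] : 2 * d <= gm /\ 2 * d <= gPQ.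
  have : Order.min gm gPQ <= gm /\ Order.min gm gPQ <= gPQ.
    by rewrite !ge_min !lexx orbT.
  rewrite /d; lra.
have [eP eP_gt0 P1_sub] := in_demand_near_raise_outside d_gt0 X_dem.
pose e := Order.min d eP.
have e_gt0 : 0 < e by rewrite lt_min d_gt0.
have [e_d e_eP] : e <= d /\ e <= eP by rewrite !ge_min !lexx orbT.
(* m1 is within gm of m, lies below both P1 and Q1, and agrees with P1 where P
   is cheaper and with Q1 elsewhere; demand at P1 (resp. Q1) stays inside X
   (resp. Y).  So GS from m1 up to P1 or Q1 keeps the item in X or Y. *)
pose P1 j := raise_outside X d P j + e.
pose Q1 := raise_outside Y (e / 2) Q.
pose m1 j := if P j < Q j then P1 j else Q1 j.
have m1_bounds j :
    [/\ 0 <= m1 j, m1 j <= P1 j, m1 j <= Q1 j & m j <= m1 j <= m j + gm].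
  have := P_ge0 j; have := Q_ge0 j.
  rewrite /m1 /P1 /Q1 /m /raise_outside; case: ltP => [PQ|QP];
    [have := gPQ_le j PQ|]; case: (j \in X); case: (j \in Y) => *;
    by split; try apply/andP; try split; lra.
have m1_ge0 j : 0 <= m1 j by case: (m1_bounds j).
have [D D_dem] := in_demand_exists v m1.
exists D => [|j jD]; first by apply: m_near D_dem => j; case: (m1_bounds j).
case PQ: (P j < Q j).
- apply: (gross_substitute_unchanged_mem gs m1_ge0 _ _ D_dem jD);
    last by rewrite /m1 PQ.
  + by move=> i; case: (m1_bounds i).
  + by apply: P1_sub => i; rewrite /P1; apply/andP; split; lra.
- apply: (gross_substitute_unchanged_mem gs m1_ge0 _ _ D_dem jD);
    last by rewrite /m1 PQ.
  + by move=> i; case: (m1_bounds i).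
  + by apply: in_demand_raise_outside Y_dem; rewrite divr_gt0.
Qed.

End Demand.

Section Bidders.
Variables (R : realType) (Omega B : finType) (v : B -> {set Omega} -> R).
Implicit Types (p q r : Omega -> R) (a c z : B -> {set Omega}).

Lemma envy_free_allocT p a : envy_free_alloc v [set: Omega] p a <->
  allocation [set: Omega] a /\ forall b, in_demand (v b) p (a b).
Proof.
split=> [[a_all a_ef] | [a_all a_dem]]; split=> // b.
  by apply/forallP => X; apply: a_ef (subsetT X).
by move=> X _; apply: (forallP (a_dem b)).
Qed.

Lemma eq_envy_free_alloc T p q a : p =1 q ->
  envy_free_alloc v T p a -> envy_free_alloc v T q a.
Proof.
move=> epq [a_all a_ef]; have eprice X : price p X = price q X by apply: eq_bigr.
by split=> // b X XT; move: (a_ef b X XT); rewrite /utility !eprice.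
Qed.

Lemma envy_free_alloc_sub T p a : allocation T a ->
  envy_free_alloc v [set: Omega] p a -> envy_free_alloc v T p a.
Proof. by move=> a_all [_ a_ef]; split=> // b X _; apply: a_ef (subsetT X). Qed.

Lemma gross_substitute_alloc_min p q a c : (forall b, gross_substitute (v b)) ->
  (forall j, 0 <= p j) -> (forall j, 0 <= q j) ->
  envy_free_alloc v [set: Omega] p a -> envy_free_alloc v [set: Omega] q c ->
  exists2 z, envy_free_alloc v [set: Omega] (fun j => Order.min (p j) (q j)) z &
    forall b j, j \in z b -> if p j < q j then j \in a b else j \in c b.
Proof.
move=> gs p_ge0 q_ge0 /envy_free_allocT[[_ a_disj] a_dem].
move=> /envy_free_allocT[[_ c_disj] c_dem].
have [z z_dem z_mem] := fin_all_exists2 (fun b =>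
  gross_substitute_demand_min (gs b) p_ge0 q_ge0 (a_dem b) (c_dem b)).
exists z => //; apply/envy_free_allocT; split=> //; split=> [b|b b' bb'].
  exact: subsetT.
apply/pred0P => j /=; apply/negP => /andP[jb jb'].
move: (z_mem b j jb) (z_mem b' j jb'); case: ifP => _ jb1 jb1'.
- by rewrite (disjointFr (a_disj _ _ bb') jb1) in jb1'.
- by rewrite (disjointFr (c_disj _ _ bb') jb1) in jb1'.
Qed.

Lemma minimal_ef_prices_le T r p q : minimal_ef_prices v T r p ->
  ef_prices v T r (fun j => Order.min (p j) (q j)) -> forall j, p j <= q j.
Proof.
move=> [_ p_min] ef_pq j; rewrite -(p_min _ ef_pq _ j) => [|i].
  by rewrite ge_min lexx orbT.
by rewrite ge_min lexx.
Qed.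

End Bidders.

Theorem corollary1 (R : realType) (Omega B : finType)
    (v : B -> {set Omega} -> R) (r : Omega -> R) :
  (forall b, valuation (v b)) ->
  (forall b, gross_substitute (v b)) ->
  (forall j, 0 <= r j) ->
  forall (S : {set Omega}) (pS : Omega -> R) (aS : B -> {set Omega})
         (pO : Omega -> R) (aO : B -> {set Omega}),
    virtual_auction v r S pS aS ->
    virtual_auction v r [set: Omega] pO aO ->
    mediator_revenue v r S pS aS != -1 ->
    forall j : Omega, final_prices r S pS j = final_prices r [set: Omega] pO j.
Proof.
move=> _ gs r_ge0 S pS aS pO aO [pS_min [[[aS_sub aS_disj] _] _]] [pO_min [pO_ef _]].
rewrite /mediator_revenue; case: ifP => [/forallP aS_dem _ | _]; last by rewrite eqxx.
set p := final_prices r S pS in aS_dem *.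
have [[r_le_pS _] _] := pS_min; have [[r_le_pO _] _] := pO_min.
have r_le_p j : r j <= p j by rewrite /p /final_prices; case: ifP.
have pO_ge0 j : 0 <= pO j := le_trans (r_ge0 j) (r_le_pO j).
have p_ge0 j : 0 <= p j := le_trans (r_ge0 j) (r_le_p j).
have aS_ef : envy_free_alloc v [set: Omega] p aS.
  by apply/envy_free_allocT; do !split=> // b; apply: subsetT.
have [z z_ef z_mem] := gross_substitute_alloc_min gs pO_ge0 p_ge0 pO_ef aS_ef.
have pO_le_p : forall j, pO j <= p j.
  apply: minimal_ef_prices_le pO_min _.
  by split; [move=> j; rewrite le_min r_le_pO r_le_p | exists z].
have z_sub b : z b \subset S.
  apply/subsetP => j /z_mem; case: (boolP (j \in S)) => // jS.
  rewrite /p /final_prices (negbTE jS) ltNge r_le_pO /=.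
  by move/(subsetP (aS_sub b)); rewrite (negbTE jS).
have pO_ef_S : envy_free_alloc v S pO z.
  have [[_ z_disj] _] := z_ef; apply: envy_free_alloc_sub; first by split.
  by apply: eq_envy_free_alloc z_ef => j; apply/min_idPl.
have pO_pS : forall j, pO j = pS j.
  apply: pS_min.2 => [|j]; first by split=> //; exists z.
  have := pO_le_p j; rewrite /p /final_prices; case: ifP => // _ pO_le_r.
  exact: le_trans pO_le_r (r_le_pS j).
move=> j; rewrite /p /final_prices in_setT /=.
case: ifPn => [_|jS]; first by rewrite pO_pS.
apply/le_anti; rewrite r_le_pO /=.
by have := pO_le_p j; rewrite /p /final_prices (negbTE jS).
Qed.
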